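(* Let $r\ge1$, $G\subset\mathbb{Z}_2^r$ a subgroup with $1^r\in G$, $S_G$ as below, and $Z_G=\sum_{\mu\in\mathrm{IS}^{(r,r)}}\dim(S_G)_\mu\,\theta_\mu\in\mathbb{C}\mathrm{IS}^{(r,r)}$. Then $S^{\otimes 2r}(Z_G)=Z_G$.
   Context: $\mathbb{C}\mathrm{IS}$ has basis $\theta_0,\theta_{1/2},\theta_{1/16}$; $S:\mathbb{C}\mathrm{IS}\to\mathbb{C}\mathrm{IS}$ is linear with $S\theta_0=\frac12\theta_0+\frac12\theta_{1/2}+\frac1{\sqrt2}\theta_{1/16}$, $S\theta_{1/2}=\frac12\theta_0+\frac12\theta_{1/2}-\frac1{\sqrt2}\theta_{1/16}$, $S\theta_{1/16}=\frac1{\sqrt2}\theta_0-\frac1{\sqrt2}\theta_{1/2}$; $\mathbb{C}\mathrm{IS}^{(r,r)}=(\mathbb{C}\mathrm{IS})^{\otimes 2r}$ with basis $\theta_\mu=\theta_{\mu_1}\otimes\cdots\otimes\theta_{\mu_{2r}}$, $\mu\in\mathrm{IS}^{(r,r)}=\mathrm{IS}^{2r}$. Identify $\mathrm{IS}=\{0,\frac12,\frac1{16}\}$ with $\{(d,c)\in\mathbb{Z}_2^2:dc=0\}$ via $0\leftrightarrow(0,0)$, $\frac12\leftrightarrow(0,1)$, $\frac1{16}\leftrightarrow(1,0)$, and componentwise $\mathrm{IS}^{(r,r)}$ with pairs $(d,c)\in(\mathbb{Z}_2^{r+r})^2$, $dc=0$. For $c\in\mathbb{Z}_2^{r+r}$,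 $|c|_l,|c|_r$ are numbers of ones among first/last $r$ coordinates, $|c|=|c|_l-|c|_r$ (componentwise products), $d_\perp=1^{2r}+d$, $\mathbb{Z}_2^d=\{\alpha:d\alpha=\alpha\}$; $A^\perp=\{\beta:|\beta a|\in2\mathbb{Z}\ \forall a\in A\}$. Construction: $\Delta(g)=(g,g)$; $D_G=\Delta G$, $C_G=D_G^\perp$. $C^{\rm even}_{r,r}=\{\alpha:|\alpha|\in2\mathbb{Z}\}$ with ordered basis $(v_1,\dots,v_{2r-1})=(\Delta e_1,\dots,\Delta e_r,\tilde e_1-\tilde e_2,\dots,\tilde e_{r-1}-\tilde e_r)$, $\tilde e_i=(e_i,0)$; $\varepsilon$ bimultiplicative to $\{\pm1\}$ with $\varepsilon(v_i,v_i)=(-1)^{|v_i|/2}$, $\varepsilon(v_i,v_j)=1$ ($i<j$), $(-1)^{|v_iv_j|}$ ($i>j$). $\mathbb{C}[\hat C_G]$: basis $e_\alpha$ ($\alpha\in C_G$), $e_\alpha e_\beta=\varepsilon(\alpha,\beta)e_{\alpha+\beta}$. For $d\in\Delta\mathbb{Z}_2^r$, $\Delta^d=\mathbb{Z}_2^d\cap\Delta\mathbb{Z}_2^r$, with $\{e_\gamma\}_{\gamma\in\Delta^d}$ spanning a copy of $\mathbb{C}[\Delta^d]$. For $d\in D_G$, $A_G(d)=\mathbb{C}[\hat C_G]\otimes_{\mathbb{C}[\Delta^d]}\mathbb{C}t_d$ (trivial module); $S_G=\bigoplus_{d\in D_G}A_G(d)$ graded by putting $e_\alpha\cdot t_d$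 in degree $(d,d_\perp\alpha)$. *)

From HB Require Import structures.
From mathcomp Require Import all_boot all_order all_algebra all_field.
Set Implicit Arguments. Unset Strict Implicit. Unset Printing Implicit Defensive.
Import Order.TTheory GRing.Theory Num.Theory.
Local Open Scope ring_scope.

Inductive IS := IS0 | IShalf | IS16.

Definition IS_to (x : IS) : 'I_3 :=
  match x with IS0 => inord 0 | IShalf => inord 1 | IS16 => inord 2 end.
Definition IS_of (i : 'I_3) : IS :=
  match val i with 0 => IS0 | 1 => IShalf | _ => IS16 end.
Lemma IS_toK : cancel IS_to IS_of.
Proof. by case; rewrite /IS_of /= inordK. Qed.

HB.instance Definition _ := Equality.copy IS (can_type IS_toK).
HB.instance Definition _ := Choice.copy IS (can_type IS_toK).
HB.instance Definition _ := Countable.copy IS (can_type IS_toK).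
HB.instance Definition _ := Finite.copy IS (can_type IS_toK).

(* Matrix of S on C IS: Smat b a = coefficient of theta_b in S theta_a. *)
Definition Smat (b a : IS) : algC :=
  match a, b with
  | IS0, IS0 => 2^-1 | IS0, IShalf => 2^-1 | IS0, IS16 => (sqrtC 2)^-1
  | IShalf, IS0 => 2^-1 | IShalf, IShalf => 2^-1 | IShalf, IS16 => - (sqrtC 2)^-1
  | IS16, IS0 => (sqrtC 2)^-1 | IS16, IShalf => - (sqrtC 2)^-1 | IS16, IS16 => 0
  end.

(* Z_2^(r+r) as boolean vectors; the first r coordinates are the "left" ones. *)
Definition vec (r : nat) := {ffun 'I_(r + r) -> bool}.
Definition hvec (r : nat) := {ffun 'I_r -> bool}.

Definition vadd r (a b : vec r) : vec r := [ffun i => addb (a i) (b i)].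
Definition vmul r (a b : vec r) : vec r := [ffun i => a i && b i].
Definition vone r : vec r := [ffun _ => true].
Definition hadd r (a b : hvec r) : hvec r := [ffun i => addb (a i) (b i)].
Definition hzero r : hvec r := [ffun _ => false].
Definition hone r : hvec r := [ffun _ => true].

Definition wl r (a : vec r) : nat := #|[set i : 'I_r | a (lshift r i)]|.
Definition wr r (a : vec r) : nat := #|[set i : 'I_r | a (rshift r i)]|.
Definition absw r (a : vec r) : int := (wl a)%:Z - (wr a)%:Z.

Definition dperp r (d : vec r) : vec r := vadd (vone r) d.

Definition Delta r (g : hvec r) : vec r :=
  [ffun i => match split i with inl j => g j | inr j => g j end].

Definition perp r (A : {set vec r}) : {set vec r} :=
  [set b | [forall a in A, (2 %| absw (vmul b a))%Z]].

Definition DG r (G : {set hvec r}) : {set vec r} := (@Delta r) @: G.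
Definition CG r (G : {set hvec r}) : {set vec r} := perp (DG G).

Definition Ceven r : {set vec r} := [set a | (2 %| absw a)%Z].

(* ordered basis of C^even (0-indexed): v_i = Delta e_i for i < r,
   v_(r+k) = e~_k - e~_(k+1) for k < r-1 *)
Definition hunit r (k : nat) : hvec r := [ffun j : 'I_r => val j == k].
Definition tunit r (k : nat) : vec r := [ffun j : 'I_(r + r) => val j == k].
Definition vbas r (i : nat) : vec r :=
  if (i < r)%N then Delta (hunit r i) else vadd (tunit r (i - r)) (tunit r (i - r).+1).

(* Z_2^d intersected with Delta Z_2^r *)
Definition Deltad r (d : vec r) : {set vec r} :=
  [set g in [set Delta h | h : hvec r] | vmul d g == g].

(* ambient space C[Z_2^(r+r)] containing C[hat C_G] *)
Definition amb r := {ffun vec r -> algC^o}.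
Definition ebas r (a : vec r) : amb r := [ffun x => (x == a)%:R].

(* Kernel of C[hat C_G] ->> C[hat C_G] (x)_{C[Delta^d]} C t_d :
   spanned by x.e_gamma - x (gamma in Delta^d), x = e_alpha, alpha in C_G,
   with e_alpha e_gamma = eps(alpha,gamma) e_(alpha+gamma). *)
Definition kerA r (G : {set hvec r}) (eps : vec r -> vec r -> algC) (d : vec r)
  : {vspace amb r} :=
  <<[seq eps a g *: ebas (vadd a g) - ebas a
      | a <- enum (CG G), g <- enum (Deltad d)]>>%VS.

(* IS^(r,r) identified with pairs (d, c), dc = 0 *)
Definition muD r (mu : {ffun 'I_(r + r) -> IS}) : vec r := [ffun i => mu i == IS16].
Definition muC r (mu : {ffun 'I_(r + r) -> IS}) : vec r := [ffun i => mu i == IShalf].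

(* dim A_G(d)_mu : the image in A_G(d) of the span of the e_alpha (alpha in C_G)
   of degree (d, d_perp alpha) = mu *)
Definition dimA r (G : {set hvec r}) (eps : vec r -> vec r -> algC) (d : vec r)
  (mu : {ffun 'I_(r + r) -> IS}) : nat :=
  (\dim (<<[seq ebas a | a <- enum (CG G)
             & ((d == muD mu) && (vmul (dperp d) a == muC mu))]>> + kerA G eps d)%VS
   - \dim (kerA G eps d))%N.

(* dim (S_G)_mu, S_G = (+)_{d in D_G} A_G(d) *)
Definition dimS r (G : {set hvec r}) (eps : vec r -> vec r -> algC)
  (mu : {ffun 'I_(r + r) -> IS}) : nat :=
  (\sum_(d in DG G) dimA G eps d mu)%N.

Definition ZG r (G : {set hvec r}) (eps : vec r -> vec r -> algC)
  : {ffun {ffun 'I_(r + r) -> IS} -> algC} :=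
  [ffun mu => (dimS G eps mu)%:R].

Definition Stens r (Z : {ffun {ffun 'I_(r + r) -> IS} -> algC})
  : {ffun {ffun 'I_(r + r) -> IS} -> algC} :=
  [ffun nu : {ffun 'I_(r + r) -> IS} => \sum_(mu : {ffun 'I_(r + r) -> IS})
                 (\prod_(k : 'I_(r + r)) Smat (nu k) (mu k)) * Z mu].

Definition eps_spec r (eps : vec r -> vec r -> algC) : Prop :=
  (forall a a' b, a \in Ceven r -> a' \in Ceven r -> b \in Ceven r ->
         eps (vadd a a') b = eps a b * eps a' b) /\
      (forall a b b', a \in Ceven r -> b \in Ceven r -> b' \in Ceven r ->
         eps a (vadd b b') = eps a b * eps a b') /\
      (forall a b, a \in Ceven r -> b \in Ceven r ->
         (eps a b = 1 \/ eps a b = -1)) /\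
      (forall i, (i < (r + r).-1)%N ->
         eps (vbas r i) (vbas r i) = (-1) ^ (absw (vbas r i) %/ 2)%Z) /\
      (forall i j, (i < j)%N -> (j < (r + r).-1)%N ->
         eps (vbas r i) (vbas r j) = 1) /\
      (forall i j, (j < i)%N -> (i < (r + r).-1)%N ->
         eps (vbas r i) (vbas r j) = (-1) ^ absw (vmul (vbas r i) (vbas r j))).

From HB Require Import structures.
From mathcomp Require Import all_boot all_order all_algebra all_field.
From mathcomp Require Import zify ring.
Set Implicit Arguments. Unset Strict Implicit. Unset Printing Implicit Defensive.
Import Order.TTheory GRing.Theory Num.Theory.
Local Open Scope ring_scope.

(* The relations defining A_G(Delta g) identify e_a with +-e_(a + c) for c in
   Delta^d; since eps is trivial on the diagonal Delta Z_2^r they are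
   consistent, so A_G(Delta g) has a basis indexed by one representative of
   each coset a + Delta^d in C_G, and dim (S_G)_mu counts the representatives
   of degree mu.  Detecting membership in C_G by the character sum
   1_{C_G}(a) = |G|^-1 sum_{h in G} (-1)^{|a Delta h|} turns Z_G into
   |G|^-1 sum_{g,h in G} of pure tensors whose factors at the coordinates i
   and r + i depend only on (g_i, h_i).  A direct computation shows that
   S (x) S maps the pair of factors for (g_i, h_i) to the pair for (h_i, g_i),
   so S^(x)2r merely exchanges g and h in the double sum. *)

Section VectorArithmetic.
Variable r : nat.
Implicit Types (a b c : vec r) (g h : hvec r).

Definition vzero : vec r := [ffun _ => false].

Lemma vaddC a b : vadd a b = vadd b a.
Proof. by apply/ffunP=> k; rewrite !ffunE addbC. Qed.

Lemma vaddA a b c : vadd a (vadd b c) = vadd (vadd a b) c.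
Proof. by apply/ffunP=> k; rewrite !ffunE addbA. Qed.

Lemma vaddvv a : vadd a a = vzero.
Proof. by apply/ffunP=> k; rewrite !ffunE addbb. Qed.

Lemma vadd0v a : vadd vzero a = a.
Proof. by apply/ffunP=> k; rewrite !ffunE. Qed.

Lemma vaddv0 a : vadd a vzero = a.
Proof. by rewrite vaddC vadd0v. Qed.

Lemma vaddKv a b : vadd a (vadd a b) = b.
Proof. by rewrite vaddA vaddvv vadd0v. Qed.

Lemma vaddAC a b c : vadd (vadd a b) c = vadd (vadd a c) b.
Proof. by rewrite -!vaddA (vaddC b). Qed.

Lemma haddK g h : hadd (hadd g h) h = g.
Proof. by apply/ffunP=> i; rewrite !ffunE -addbA addbb addbF. Qed.

Lemma haddIr h0 : injective (fun h => hadd h h0).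
Proof. by apply: (can_inj (g := fun h => hadd h h0)) => h; rewrite haddK. Qed.

Lemma Delta_lshift g i : Delta g (lshift r i) = g i.
Proof. by rewrite ffunE (unsplitK (inl i)). Qed.

Lemma Delta_rshift g i : Delta g (rshift r i) = g i.
Proof. by rewrite ffunE (unsplitK (inr i)). Qed.

Lemma Delta_inj : injective (@Delta r).
Proof. by move=> g h E; apply/ffunP=> i; rewrite -Delta_lshift E Delta_lshift. Qed.

Lemma DeltaD g h : Delta (hadd g h) = vadd (Delta g) (Delta h).
Proof. by apply/ffunP=> k; rewrite !ffunE; case: split => j; rewrite ffunE. Qed.

Lemma Delta0 : Delta (hzero r) = vzero.
Proof. by apply/ffunP=> k; rewrite !ffunE; case: split => j; rewrite ffunE. Qed.

Lemma Delta1 : Delta (hone r) = vone r.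
Proof. by apply/ffunP=> k; rewrite !ffunE; case: split => j; rewrite ffunE. Qed.

Lemma vmul_Delta g h : vmul (Delta g) (Delta h) = Delta [ffun i => g i && h i].
Proof. by apply/ffunP=> k; rewrite !ffunE; case: split => j; rewrite ffunE. Qed.

Lemma absw_Delta g : absw (Delta g) = 0.
Proof.
rewrite /absw /wl /wr.
have -> : [set i | Delta g (rshift r i)] = [set i | Delta g (lshift r i)].
  by apply/setP=> i; rewrite !inE Delta_lshift Delta_rshift.
by rewrite subrr.
Qed.

Lemma hvec_ind (P : hvec r -> Prop) :
  P (hzero r) -> (forall h (i : 'I_r), P h -> P (hadd h (hunit r i))) ->
  forall h, P h.
Proof.
move=> P0 PS h; have [n] := ubnP #|[set i | h i]|.
elim: n h => // n IH h; rewrite ltnS leq_eqVlt => /predU1P [Hn|]; last exact: IH.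
have [h0|[i hi]] := set_0Vmem [set i | h i].
  suff -> : h = hzero r by [].
  by apply/ffunP=> i; move/setP/(_ i): h0; rewrite !inE ffunE => ->.
rewrite inE in hi; rewrite -(haddK h (hunit r i)); apply/PS/IH.
suff -> : [set j | hadd h (hunit r i) j] = [set j | h j] :\ i.
  by rewrite -Hn (cardsD1 i [set j | h j]) inE hi.
apply/setP=> j; rewrite !inE !ffunE.
case: (eqVneq j i) => [->|nji]; first by rewrite eqxx hi.
by rewrite val_eqE (negbTE nji) addbF.
Qed.

End VectorArithmetic.

Section SignCharacter.
Variable r : nat.
Implicit Types (a b : vec r) (g h : hvec r).

Definition chi a b : algC := \prod_k (if a k && b k then -1 else 1).

Lemma chiE a b : chi a b = (-1) ^+ #|[set k | a k && b k]|.
Proof.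
rewrite /chi -prodr_const [RHS]big_mkcond /=; apply: eq_bigr => k _.
by rewrite inE.
Qed.

Lemma chiC a b : chi a b = chi b a.
Proof. by apply: eq_bigr => k _; rewrite andbC. Qed.

Lemma chiDl a a' b : chi (vadd a a') b = chi a b * chi a' b.
Proof.
rewrite /chi -big_split /=; apply: eq_bigr => k _; rewrite ffunE.
by case: (a k); case: (a' k); case: (b k); rewrite ?mulrNN ?mulr1 ?mul1r.
Qed.

Lemma chiDr a b b' : chi a (vadd b b') = chi a b * chi a b'.
Proof. by rewrite chiC chiDl !(chiC a). Qed.

Lemma chi_pm1 a b : chi a b = 1 \/ chi a b = -1.
Proof. by rewrite chiE -signr_odd; case: odd; [right|left]; rewrite ?expr1 ?expr0. Qed.

Lemma chi_Delta g h : chi (Delta g) (Delta h) = 1.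
Proof.
rewrite /chi big_split_ord /= -big_split /= big1 // => i _.
by rewrite !Delta_lshift !Delta_rshift; case: (_ && _); rewrite ?mulrNN ?mulr1.
Qed.

Lemma card_vsupp a : #|[set k | a k]| = (wl a + wr a)%N.
Proof.
rewrite /wl /wr -!sum1dep_card big_split_ord /=.
by congr (_ + _)%N; apply: eq_bigl => i; rewrite !inE.
Qed.

Lemma dvdz2_subn (m n : nat) : (2 %| m%:Z - n%:Z)%Z = ~~ odd (m + n).
Proof.
have [le_nm|lt_mn] := leqP n m.
  by rewrite subzn // dvdzE absz_nat dvdn2 oddB // oddD.
rewrite -opprB subzn ?(ltnW lt_mn) // dvdzE abszN absz_nat dvdn2 oddB ?(ltnW lt_mn) //.
by rewrite oddD addbC.
Qed.

Lemma chi_eq1_even a b : (chi a b == 1) = (2 %| absw (vmul a b))%Z.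
Proof.
rewrite /absw dvdz2_subn -card_vsupp chiE -signr_odd.
have -> : [set k | vmul a b k] = [set k | a k && b k].
  by apply/setP=> k; rewrite !inE ffunE.
case: odd; rewrite ?expr0 ?eqxx //= expr1.
by apply/negbTE; rewrite -subr_eq0 -opprD oppr_eq0 (_ : 1 + 1 = 2%:R) // pnatr_eq0.
Qed.

Lemma Ceven_chi a : (a \in Ceven r) = (chi a (vone r) == 1).
Proof.
rewrite inE chi_eq1_even; congr (_ %| absw _)%Z.
by apply/ffunP=> k; rewrite !ffunE andbT.
Qed.

Lemma Delta_Ceven g : Delta g \in Ceven r.
Proof. by rewrite Ceven_chi -Delta1 chi_Delta. Qed.

Lemma vzero_Ceven : vzero r \in Ceven r.
Proof. by rewrite -Delta0 Delta_Ceven. Qed.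

End SignCharacter.

Section DualOfDeltaG.
Variables (r : nat) (G : {set hvec r}).

Lemma CG_chi a : (a \in CG G) = [forall g in G, chi a (Delta g) == 1].
Proof.
rewrite inE; apply/forall_inP/forall_inP => H.
  by move=> g gG; rewrite chi_eq1_even; apply/H/imset_f.
by move=> x /imsetP [g gG ->]; rewrite -chi_eq1_even; apply: H.
Qed.

Lemma CG_vadd a b : a \in CG G -> b \in CG G -> vadd a b \in CG G.
Proof.
rewrite !CG_chi => /forall_inP Ha /forall_inP Hb; apply/forall_inP => g gG.
by rewrite chiDl (eqP (Ha g gG)) (eqP (Hb g gG)) mulr1.
Qed.

Lemma Delta_CG h : Delta h \in CG G.
Proof. by rewrite CG_chi; apply/forall_inP => g _; rewrite chi_Delta. Qed.

Lemma CG_Ceven a : hone r \in G -> a \in CG G -> a \in Ceven r.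
Proof. by move=> G1; rewrite CG_chi Ceven_chi -Delta1 => /forall_inP; apply. Qed.

End DualOfDeltaG.

Section TwistTrivialOnDiagonal.
Variables (r : nat) (eps : vec r -> vec r -> algC).
Hypothesis eps_ok : eps_spec eps.
Implicit Types (a b : vec r) (g h : hvec r).

Lemma eps_pm1 a b : a \in Ceven r -> b \in Ceven r -> eps a b = 1 \/ eps a b = -1.
Proof. by case: eps_ok => _ [_ [Hpm _]]; apply: Hpm. Qed.

Lemma eps_neq0 a b : a \in Ceven r -> b \in Ceven r -> eps a b != 0.
Proof. by move=> ae be; case: (eps_pm1 ae be) => ->; rewrite ?oppr_eq0 oner_eq0. Qed.

Lemma eps_sq a b : a \in Ceven r -> b \in Ceven r -> eps a b * eps a b = 1.
Proof. by move=> ae be; case: (eps_pm1 ae be) => ->; rewrite ?mulrNN mulr1. Qed.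

Lemma eps_v0 a : a \in Ceven r -> eps a (vzero r) = 1.
Proof.
case: eps_ok => _ [epsDr _] ae; have e0 := vzero_Ceven r.
apply: (mulIf (eps_neq0 ae e0)); rewrite mul1r -epsDr //.
by rewrite vaddvv.
Qed.

Lemma eps_0v a : a \in Ceven r -> eps (vzero r) a = 1.
Proof.
case: eps_ok => epsDl _ ae; have e0 := vzero_Ceven r.
apply: (mulIf (eps_neq0 e0 ae)); rewrite mul1r -epsDl //.
by rewrite vaddvv.
Qed.

Lemma vbas_Delta (i : 'I_r) : vbas r i = Delta (hunit r i).
Proof. by rewrite /vbas ltn_ord. Qed.

Lemma eps_vbas_Delta (i j : 'I_r) : eps (vbas r i) (vbas r j) = 1.
Proof.
case: eps_ok => _ [_ [_ [eps_diag [eps_up eps_low]]]].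
have lt_r k : (k < r)%N -> (k < (r + r).-1)%N by lia.
case: (ltngtP i j) => [ij|ji|/val_inj ->].
- by apply: eps_up; rewrite ?lt_r.
- by rewrite eps_low ?lt_r // !vbas_Delta vmul_Delta absw_Delta.
- by rewrite eps_diag ?lt_r // vbas_Delta absw_Delta.
Qed.

Lemma eps_Delta_vbas h (j : 'I_r) : eps (Delta h) (vbas r j) = 1.
Proof.
have je : vbas r j \in Ceven r by rewrite vbas_Delta Delta_Ceven.
elim/hvec_ind: h => [|h i IH]; first by rewrite Delta0 eps_0v.
case: eps_ok => epsDl _.
by rewrite DeltaD epsDl ?Delta_Ceven // IH -vbas_Delta eps_vbas_Delta mulr1.
Qed.

Lemma eps_Delta g h : eps (Delta g) (Delta h) = 1.
Proof.
elim/hvec_ind: h => [|h i IH]; first by rewrite Delta0 eps_v0 ?Delta_Ceven.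
case: eps_ok => _ [epsDr _].
by rewrite DeltaD epsDr ?Delta_Ceven // IH -vbas_Delta eps_Delta_vbas mulr1.
Qed.

End TwistTrivialOnDiagonal.

Section Pairing.
Variable r : nat.
Implicit Types (w : vec r -> algC) (u v : amb r).

Definition pairing w v : algC := \sum_y w y * v y.

Lemma pairingZB w c u v : pairing w (c *: u - v) = c * pairing w u - pairing w v.
Proof.
rewrite /pairing mulr_sumr -sumrB; apply: eq_bigr => y _.
by rewrite !ffunE /= mulrBr mulrCA.
Qed.

Lemma pairing_ebas w x : pairing w (ebas x) = w x.
Proof.
rewrite /pairing (bigD1 x) //= big1 ?addr0 => [|y yx]; rewrite ffunE.
  by rewrite eqxx mulr1.
by rewrite (negbTE yx) mulr0.
Qed.

Lemma pairing_delta x v : pairing (fun y => (y == x)%:R) v = v x.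
Proof.
rewrite /pairing (bigD1 x) //= big1 ?addr0 => [|y yx]; first by rewrite eqxx mul1r.
by rewrite (negbTE yx) mul0r.
Qed.

Lemma pairing_span_eq0 w (X : seq (amb r)) v :
  {in X, forall x, pairing w x = 0} -> v \in <<X>>%VS -> pairing w v = 0.
Proof.
move=> HX /(@coord_span _ _ _ (in_tuple X)) ->; rewrite /pairing.
under eq_bigr => y _ do rewrite sum_ffunE mulr_sumr.
rewrite exchange_big /= big1 // => i _.
rewrite -[RHS](mulr0 (coord (in_tuple X) i v)) -[in RHS](HX _ (mem_nth 0 (ltn_ord i))).
by rewrite /pairing mulr_sumr; apply: eq_bigr => y _; rewrite ffunE /= mulrCA.
Qed.

Lemma dim_span_ebas (s : seq (vec r)) :
  uniq s -> \dim <<[seq ebas b | b <- s]>>%VS = size s.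
Proof.
move=> s_uniq; have /eqP -> : free [seq ebas b | b <- s]; last by rewrite size_map.
rewrite -[[seq _ | _ <- s]]/(tval (map_tuple (@ebas r) (in_tuple s))).
apply/freeP => k Hk i; have lt_is := ltn_ord i.
move/ffunP: Hk => /(_ (nth (vzero r) s i)).
rewrite sum_ffunE ffunE (bigD1 i) //= big1 ?addr0.
  by rewrite ffunE (nth_map (vzero r)) // ffunE eqxx => ki0; rewrite -[k i]mulr1.
move=> j ji; have lt_js := ltn_ord j.
rewrite ffunE (nth_map (vzero r)) // ffunE nth_uniq //.
by rewrite eq_sym val_eqE (negbTE ji) scaler0.
Qed.

End Pairing.

Section BasisOfA.
Variables (r : nat) (G : {set hvec r}) (eps : vec r -> vec r -> algC).
Hypothesis eps_ok : eps_spec eps.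
Hypothesis G1 : hone r \in G.
Variables (g : hvec r) (nu : {ffun 'I_(r + r) -> IS}).
Implicit Types (a b c : vec r) (h : hvec r).

Local Notation H := (Deltad (Delta g)).

Definition has_degree a := (Delta g == muD nu) && (vmul (dperp (Delta g)) a == muC nu).

(* The cosets of Delta^d are translates by the Delta h with h <= g, so each
   coset has exactly one element vanishing on the left copy of the support of g. *)
Definition canonical a := [forall i, g i ==> ~~ a (lshift r i)].

Definition reps := [set a in CG G | has_degree a && canonical a].

Lemma mem_Deltad c : c \in H -> exists2 h, c = Delta h & forall i, h i -> g i.
Proof.
rewrite inE => /andP [/imsetP [h _ ->] /eqP E]; exists h => // i hi.
by move/ffunP: E => /(_ (lshift r i)); rewrite ffunE !Delta_lshift hi andbT.
Qed.

Lemma Delta_Deltad h : (forall i, h i -> g i) -> Delta h \in H.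
Proof.
move=> hg; rewrite inE imset_f //=; apply/eqP/ffunP=> k.
rewrite !ffunE; case: split => i; rewrite ?ffunE;
  by case: (boolP (h i)) => hi; rewrite ?andbT ?andbF ?hg.
Qed.

Lemma Deltad_Ceven c : c \in H -> c \in Ceven r.
Proof. by case/mem_Deltad => h -> _; apply: Delta_Ceven. Qed.

Lemma Deltad_vadd b c : b \in H -> c \in H -> vadd b c \in H.
Proof.
case/mem_Deltad=> h -> hg; case/mem_Deltad=> h' -> h'g; rewrite -DeltaD.
by apply: Delta_Deltad => i; rewrite ffunE; case: (boolP (h i)) => hi /=; auto.
Qed.

Lemma vzero_Deltad : vzero r \in H.
Proof. by rewrite -Delta0; apply: Delta_Deltad => i; rewrite ffunE. Qed.

Definition canonize_shift a := Delta [ffun i => g i && a (lshift r i)].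
Definition canonize a := vadd a (canonize_shift a).

Lemma canonize_shift_Deltad a : canonize_shift a \in H.
Proof. by apply: Delta_Deltad => i; rewrite ffunE => /andP []. Qed.

Lemma canonize_reps a : a \in CG G -> has_degree a -> canonize a \in reps.
Proof.
move=> aC /andP [Ed Ec].
rewrite inE CG_vadd ?Delta_CG //= /has_degree Ed /=; apply/andP; split.
  rewrite -(eqP Ec); apply/eqP/ffunP=> k; rewrite !ffunE.
  by case: split => i; rewrite ffunE; case: (g i) => //=; rewrite addbF.
apply/forallP=> i; rewrite !ffunE (unsplitK (inl i)) ffunE.
by case: (g i) => //=; case: (a _).
Qed.

Lemma reps_coset_uniq b c : b \in reps -> c \in reps -> vadd b c \in H -> b = c.
Proof.
move=> + + /mem_Deltad [h E hg].
rewrite !inE => /andP [_ /andP [_ /forallP Rb]] /andP [_ /andP [_ /forallP Rc]].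
suff h0 : h = hzero r by rewrite -(vaddKv b c) E h0 Delta0 vaddv0.
apply/ffunP=> i; rewrite ffunE; apply/negP => hi.
move/ffunP: E => /(_ (lshift r i)); rewrite ffunE Delta_lshift hi.
by have := Rb i; have := Rc i; rewrite (hg i hi) /= => /negbTE -> /negbTE ->.
Qed.

Local Notation K := (kerA G eps (Delta g)).
Definition Vreps := <<[seq ebas b | b <- enum reps]>>%VS.
Definition Vdeg := <<[seq ebas a | a <- enum (CG G) & has_degree a]>>%VS.

(* Supported on the coset b + Delta^d, this functional is invariant under the
   relations eps a c *: e_(a + c) = e_a (c in Delta^d) because eps is trivial
   on Delta^d x Delta^d; it therefore vanishes on K and detects e_b. *)
Definition coset_weight b y : algC := (vadd y b \in H)%:R * eps b (vadd y b).

Lemma coset_weight_shift a b c : a \in CG G -> b \in CG G -> c \in H ->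
  eps a c * coset_weight b (vadd a c) = coset_weight b a.
Proof.
move=> aC bC cH; case: eps_ok => epsDl [epsDr _].
have be := CG_Ceven G1 bC; have ce := Deltad_Ceven cH.
rewrite /coset_weight vaddAC.
have [abH|abH] := boolP (vadd a b \in H); last first.
  suff /negbTE -> : vadd (vadd a b) c \notin H by rewrite !mul0r mulr0.
  apply: contra abH => abcH.
  by rewrite -[vadd a b]vaddv0 -(vaddvv c) vaddA Deltad_vadd.
rewrite Deltad_vadd // !mul1r.
case/mem_Deltad: abH => h E _; case/mem_Deltad: cH => h' Ec _; rewrite E Ec.
have -> : a = vadd b (Delta h) by rewrite -E (vaddC a) vaddKv.
rewrite epsDl ?Delta_Ceven // epsDr ?Delta_Ceven // (eps_Delta eps_ok) mulr1.
by rewrite mulrCA (eps_sq eps_ok) ?Delta_Ceven ?mulr1.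
Qed.

Lemma kerA_coset_weight b v : b \in CG G -> v \in K -> pairing (coset_weight b) v = 0.
Proof.
move=> bC vK; apply: (pairing_span_eq0 _ vK) => u /allpairsP [[a c] [/= aC cH ->]].
rewrite mem_enum in aC; rewrite mem_enum in cH.
by rewrite pairingZB !pairing_ebas coset_weight_shift // subrr.
Qed.

Lemma Vreps_supp v x : v \in Vreps -> x \notin reps -> v x = 0.
Proof.
move=> vV xR; rewrite -pairing_delta; apply: (pairing_span_eq0 _ vV) => u /mapP [b].
rewrite mem_enum => bR ->; rewrite pairing_ebas.
by case: eqP => // E; rewrite -E bR in xR.
Qed.

Lemma Vreps_kerA_disjoint : (Vreps :&: K = 0)%VS.
Proof.
apply/eqP; rewrite -subv0; apply/subvP => v; rewrite memv_cap memv0 => /andP [vV vK].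
apply/eqP/ffunP => x; rewrite ffunE.
have [xR|] := boolP (x \in reps); last exact: Vreps_supp.
have xC : x \in CG G by move: xR; rewrite inE => /andP [].
have := kerA_coset_weight xC vK; rewrite /pairing (bigD1 x) //= big1 ?addr0.
  rewrite /coset_weight vaddvv vzero_Deltad mul1r (eps_v0 eps_ok) ?mul1r //.
  exact: CG_Ceven G1 xC.
move=> y yx; have [yR|yR] := boolP (y \in reps); last by rewrite Vreps_supp ?mulr0.
rewrite /coset_weight; have [yxH|] := boolP (vadd y x \in H); last by rewrite !mul0r.
by rewrite (reps_coset_uniq yR xR yxH) eqxx in yx.
Qed.

Lemma Vreps_sub_Vdeg : (Vreps <= Vdeg)%VS.
Proof.
apply/span_subvP => u /mapP [b]; rewrite mem_enum => bR ->.
apply/memv_span/map_f; rewrite mem_filter mem_enum.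
by move: bR; rewrite inE => /andP [-> /andP [-> _]].
Qed.

Lemma Vdeg_sub_Vreps_kerA : (Vdeg <= Vreps + K)%VS.
Proof.
apply/span_subvP => u /mapP [a]; rewrite mem_filter mem_enum => /andP [da aC] ->.
set c := canonize_shift a; set e := eps a c.
have relK : e *: ebas (vadd a c) - ebas a \in K.
  apply/memv_span/allpairsP; exists (a, c); split; rewrite ?mem_enum //.
  exact: canonize_shift_Deltad.
rewrite -[ebas a](subKr (e *: ebas (vadd a c))); apply: memv_add.
  by apply/memvZ/memv_span/map_f; rewrite mem_enum canonize_reps.
by rewrite memvN.
Qed.

Lemma dimA_card_reps : dimA G eps (Delta g) nu = #|reps|.
Proof.
have -> : dimA G eps (Delta g) nu = (\dim (Vreps + K) - \dim K)%N.
  congr (\dim _ - _)%N; apply: subv_anti; rewrite subv_add Vdeg_sub_Vreps_kerA addvSr.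
  by rewrite subv_add addvSr andbT (subv_trans Vreps_sub_Vdeg) // addvSl.
rewrite dimv_disjoint_sum ?Vreps_kerA_disjoint // addnK.
by rewrite dim_span_ebas ?enum_uniq -?cardE.
Qed.

End BasisOfA.

Section IndicatorOfCG.
Variables (r : nat) (G : {set hvec r}).
Hypothesis G0 : hzero r \in G.
Hypothesis Gadd : forall g h, g \in G -> h \in G -> hadd g h \in G.

Lemma sum_chi_Delta a :
  \sum_(h in G) chi a (Delta h) = if a \in CG G then #|G|%:R else 0.
Proof.
case: ifPn; rewrite CG_chi.
  by move=> /forall_inP aG; rewrite -sumr_const; apply: eq_bigr => h /aG /eqP.
move=> /forall_inPn [h0 h0G /negbTE chi_h0].
have {}chi_h0 : chi a (Delta h0) = -1.
  by case: (chi_pm1 a (Delta h0)) chi_h0 => ->; rewrite ?eqxx.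
set S := \sum_(h in G) _; suff : S = - S.
  by move/eqP; rewrite -subr_eq0 opprK -mulr2n mulrn_eq0 /= => /eqP.
rewrite /S [LHS](reindex_inj (@haddIr _ h0)) /= -sumrN.
apply: eq_big => [h|h _]; last by rewrite DeltaD chiDr chi_h0 mulrN1.
by apply/idP/idP => [/Gadd/(_ h0G)|/Gadd/(_ h0G)]; rewrite ?haddK.
Qed.

Lemma card_G_neq0 : #|G|%:R != 0 :> algC.
Proof. by rewrite pnatr_eq0 -lt0n card_gt0; apply/set0Pn; exists (hzero r). Qed.

Lemma indicator_CG a :
  (a \in CG G)%:R = #|G|%:R^-1 * \sum_(h in G) chi a (Delta h) :> algC.
Proof. by rewrite sum_chi_Delta; case: ifP; rewrite ?mulr0 ?mulVf ?card_G_neq0. Qed.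

End IndicatorOfCG.

Lemma eqISE (x y : IS) : (x == y) =
  match x, y with IS0, IS0 | IShalf, IShalf | IS16, IS16 => true | _, _ => false end.
Proof. by case: x; case: y => //=; apply/eqP. Qed.

Definition label (x b : bool) : IS := if x then IS16 else if b then IShalf else IS0.

Definition coord_ok (L x b : bool) (m : IS) : bool :=
  (m == label x b) && ~~ [&& L, x & b].

(* The factor of Z_G at coordinate k, with x = g_k, y = h_k and L telling
   whether k is a left coordinate: the sum over the value b of a_k of the sign
   it contributes to chi a (Delta h), subject to the constraints that
   has_degree and canonical impose at k. *)
Definition local_factor (L x y : bool) (m : IS) : algC :=
  \sum_(b : bool) (if b && y then -1 else 1) * (coord_ok L x b m)%:R.

Definition is_left r (k : 'I_(r + r)) : bool := if split k is inl _ then true else false.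

Definition factor r (g h : hvec r) (k : 'I_(r + r)) : IS -> algC :=
  local_factor (is_left k) (Delta g k) (Delta h k).

Lemma natr_forall (I : finType) (P : pred I) :
  ([forall k, P k])%:R = \prod_k (P k)%:R :> algC.
Proof.
have [/forallP PI | /forallPn [k Pk]] := boolP [forall k, P k].
  by rewrite big1 // => k _; rewrite PI.
by rewrite (bigD1 k) //= (negbTE Pk) mul0r.
Qed.

Section CoordinateEvaluation.
Variable r : nat.
Implicit Types (a b : vec r) (nu : {ffun 'I_(r + r) -> IS}).

Lemma vmulE a b k : vmul a b k = a k && b k.
Proof. by rewrite ffunE. Qed.

Lemma dperpE a k : dperp a k = ~~ a k.
Proof. by rewrite !ffunE. Qed.

Lemma muDE nu k : muD nu k = (nu k == IS16).
Proof. by rewrite ffunE. Qed.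

Lemma muCE nu k : muC nu k = (nu k == IShalf).
Proof. by rewrite ffunE. Qed.

End CoordinateEvaluation.

Lemma has_degree_canonicalE r (g : hvec r) nu (a : vec r) :
  has_degree g nu a && canonical g a =
  [forall k, coord_ok (is_left k) (Delta g k) (a k) (nu k)].
Proof.
apply/andP/forallP => [[/andP [/eqP Ed /eqP Ec] /forallP Ca] k | Hk].
  move/ffunP: Ed => /(_ k); move/ffunP: Ec => /(_ k).
  rewrite vmulE dperpE muDE muCE /coord_ok => Ec Ed; apply/andP; split.
    by move: Ec Ed; case: (Delta g k); case: (a k); case: (nu k); rewrite ?eqISE.
  rewrite /is_left; case Ek: (split k) => [i|] //=.
  by rewrite -(splitK k) Ek /= Delta_lshift; case: (g i) (Ca i); case: (a _).
split; first (apply/andP; split).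
- apply/eqP/ffunP => k; move: (Hk k); rewrite /coord_ok muDE.
  by case: (Delta g k); case: (a k); case: (nu k); rewrite ?eqISE.
- apply/eqP/ffunP => k; move: (Hk k); rewrite /coord_ok vmulE dperpE muCE.
  by case: (Delta g k); case: (a k); case: (nu k); rewrite ?eqISE.
- apply/forallP => i; move: (Hk (lshift r i)).
  rewrite /coord_ok /is_left (unsplitK (inl i)) Delta_lshift.
  by case: (g i); case: (a _); rewrite ?andbF.
Qed.

Section ProductFormula.
Variables (r : nat) (G : {set hvec r}) (eps : vec r -> vec r -> algC).
Hypothesis eps_ok : eps_spec eps.
Hypothesis G0 : hzero r \in G.
Hypothesis Gadd : forall g h, g \in G -> h \in G -> hadd g h \in G.
Hypothesis G1 : hone r \in G.

Lemma card_reps g nu : #|reps G g nu|%:R =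
  \sum_a (a \in CG G)%:R * (has_degree g nu a && canonical g a)%:R :> algC.
Proof.
rewrite -sum1_card natr_sum big_mkcond /=; apply: eq_bigr => a _.
rewrite inE; case: (a \in CG G); last by rewrite mul0r.
by rewrite mul1r /=; case: (_ && _).
Qed.

Lemma ZG_product_formula nu : ZG G eps nu =
  #|G|%:R^-1 * \sum_(g in G) \sum_(h in G) \prod_k factor g h k (nu k).
Proof.
rewrite ffunE /dimS natr_sum /DG big_imset /=; last by move=> x y _ _; apply: Delta_inj.
rewrite mulr_sumr; apply: eq_bigr => g gG.
rewrite (dimA_card_reps eps_ok G1) card_reps.
under [LHS]eq_bigr => a _ do rewrite (indicator_CG G0 Gadd) -mulrA.
rewrite -mulr_sumr; congr (_ * _).
under [LHS]eq_bigr => a _ do rewrite mulr_suml.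
rewrite exchange_big /=; apply: eq_bigr => h hG.
rewrite /factor /local_factor bigA_distr_bigA /=; apply: eq_bigr => a _.
by rewrite has_degree_canonicalE natr_forall /chi -big_split.
Qed.

End ProductFormula.

Definition Sact (f : IS -> algC) (n : IS) : algC := \sum_m Smat n m * f m.

Definition u_plus (m : IS) : algC := if m is IS16 then 0 else 1.
Definition u_minus (m : IS) : algC :=
  match m with IS0 => 1 | IShalf => -1 | IS16 => 0 end.
Definition u_sigma (m : IS) : algC := if m is IS16 then 1 else 0.

Lemma sumIS (F : IS -> algC) : \sum_m F m = F IS0 + F IShalf + F IS16.
Proof.
rewrite (bigD1 IS0) //= (bigD1 IShalf) ?eqISE //= (bigD1 IS16) ?eqISE //=.
by rewrite big1 ?addr0 ?addrA // => -[]; rewrite !eqISE.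
Qed.

Lemma Sact_eq f f' : f =1 f' -> Sact f =1 Sact f'.
Proof. by move=> ff' n; apply: eq_bigr => m _; rewrite ff'. Qed.

Lemma SactZ c f : Sact (fun m => c * f m) =1 (fun n => c * Sact f n).
Proof. by move=> n; rewrite /Sact mulr_sumr; apply: eq_bigr => m _; rewrite mulrCA. Qed.

Lemma sqrt2_neq0 : sqrtC 2 != 0 :> algC.
Proof. by rewrite sqrtC_eq0 pnatr_eq0. Qed.

Lemma sqrt2_sq : sqrtC 2 * sqrtC 2 = 2 :> algC.
Proof. by rewrite -expr2 sqrtCK. Qed.

Lemma sqrt2_half : sqrtC 2 = 2 / sqrtC 2 :> algC.
Proof. by apply: (mulIf sqrt2_neq0); rewrite divfK ?sqrt2_neq0 // sqrt2_sq. Qed.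

Lemma Sact_plus : Sact u_plus =1 u_plus.
Proof. by move=> n; rewrite /Sact sumIS; case: n => /=; field; apply: sqrt2_neq0. Qed.

Lemma Sact_minus : Sact u_minus =1 (fun n => sqrtC 2 * u_sigma n).
Proof.
move=> n; rewrite sqrt2_half /Sact sumIS.
by case: n => /=; field; apply: sqrt2_neq0.
Qed.

Lemma Sact_sigma : Sact u_sigma =1 (fun n => (sqrtC 2)^-1 * u_minus n).
Proof. by move=> n; rewrite /Sact sumIS; case: n => /=; field; apply: sqrt2_neq0. Qed.

Lemma Sact0 : Sact (fun _ => 0) =1 (fun _ => 0).
Proof. by move=> n; rewrite /Sact big1 // => m _; rewrite mulr0. Qed.

Lemma local_factorE L x y : local_factor L x y =1
  if x then
    if L then u_sigma else if y then (fun _ => 0) else (fun m => 2 * u_sigma m)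
  else if y then u_minus else u_plus.
Proof.
move=> m; rewrite /local_factor big_bool /coord_ok.
by case: L; case: x; case: y; case: m; rewrite /= ?eqISE /=; ring.
Qed.

Lemma Sact_local_factor_pair x y nl nr :
  Sact (local_factor true x y) nl * Sact (local_factor false x y) nr =
  local_factor true y x nl * local_factor false y x nr.
Proof.
rewrite !(Sact_eq (local_factorE _ _ _)) !local_factorE.
case: x; case: y => /=;
  rewrite ?SactZ ?Sact0 ?Sact_sigma ?Sact_minus ?Sact_plus ?mulr0 //.
all: have := sqrt2_neq0; have := sqrt2_sq; set s := sqrtC 2 => s2 s0.
all: by rewrite -s2; field.
Qed.

Section Invariance.
Variable r : nat.
Implicit Types (g h : hvec r) (nu : {ffun 'I_(r + r) -> IS}).

Lemma factor_lshift g h i : factor g h (lshift r i) = local_factor true (g i) (h i).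
Proof. by rewrite /factor /is_left (unsplitK (inl i)) !Delta_lshift. Qed.

Lemma factor_rshift g h i : factor g h (rshift r i) = local_factor false (g i) (h i).
Proof. by rewrite /factor /is_left (unsplitK (inr i)) !Delta_rshift. Qed.

Lemma prod_Sact_factor g h nu :
  \prod_k Sact (factor g h k) (nu k) = \prod_k factor h g k (nu k).
Proof.
rewrite !big_split_ord /= -!big_split; apply: eq_bigr => i _.
by rewrite /= !factor_lshift !factor_rshift Sact_local_factor_pair.
Qed.

Lemma Stens_pure (f : 'I_(r + r) -> IS -> algC) nu :
  \sum_(mu : {ffun 'I_(r + r) -> IS})
     (\prod_k Smat (nu k) (mu k)) * \prod_k f k (mu k) =
  \prod_k Sact (f k) (nu k).
Proof. by rewrite /Sact bigA_distr_bigA; apply: eq_bigr => mu _; rewrite -big_split. Qed.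

End Invariance.

Unset Implicit Arguments.
Theorem mainTheorem15 (r : nat) (G : {set hvec r})
  (eps : vec r -> vec r -> algC) :
  (0 < r)%N ->
  hzero r \in G ->
  (forall g h, g \in G -> h \in G -> hadd g h \in G) ->
  hone r \in G ->
  eps_spec eps ->
  Stens (ZG G eps) = ZG G eps.
Proof.
move=> _ G0 Gadd G1 eps_ok; apply/ffunP => nu.
have ZGE := ZG_product_formula eps_ok G0 Gadd G1.
rewrite ffunE [RHS]ZGE [in RHS]exchange_big /=.
under [LHS]eq_bigr => mu _ do rewrite ZGE mulrCA mulr_sumr.
rewrite -mulr_sumr exchange_big; congr (_ * _); apply: eq_bigr => h _.
under [LHS]eq_bigr => mu _ do rewrite mulr_sumr.
rewrite exchange_big; apply: eq_bigr => g _.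
by rewrite Stens_pure prod_Sact_factor.
Qed.
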